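(* Let $t,b,k$ be positive integers with $3\le k\le t$ and $\ell=bk/(t(t-1))$ an integer, and let $d^*$ be a circular neighbor-balanced design in $\Omega_{(t,b,k)}$. Then under model $(\mathcal{M}1)$ the information matrix for the total effects $\phi=\tau+\lambda$ is $$C_{d^*}[\phi]=\frac{b(k-2)}{2(t-1)}\,Q_t,\qquad Q_t=I_t-t^{-1}J_t.$$
   Context: Designs: $t$ treatments, $b$ linear blocks; block $i$ has inner plots $j=1,\dots,k$ and border plots $j=0,k+1$; $d(i,j)$ is the treatment on plot $(i,j)$; circular means $d(i,0)=d(i,k)$, $d(i,k+1)=d(i,1)$. $\Omega_{(t,b,k)}$ is the set of circular designs with $t$ treatments and $b$ blocks of length $k$. $J_t$ is the $t\times t$ all-ones matrix. Model $(\mathcal{M}1)$: responses $Y_{i,j}$ ($1\le i\le b$, $1\le j\le k$) uncorrelated with common variance, $\mathbb{E}(Y_{i,j})=\beta_i+\tau_{d(i,j)}+\lambda_{d(i,j-1)}$, i.e. $\mathbb{E}(Y)=B\beta+T_d\tau+L_d\lambda$ with $B$ block incidence and $T_d,L_d$ ($bk\times t$) having a single $1$ in row $(i,j)$ at column $d(i,j)$, resp. $d(i,j-1)$. $\phi=K'\alpha$ with $\alpha=(\tau',\lambda')'$, $K=\mathbf 1_2\otimes I_t$. Information matrix: with $A=(T_d\mid L_d)$, $X^+$ the Moore–Penrose inverse, $\mathrm{pr}_{(X)}=X(X'X)^+X'$, $\mathrm{pr}^\perp_{(X)}=I-\mathrm{pr}_{(X)}$, $M=I-K(K'K)^+K'$,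 $X_1=AK(K'K)^+$, $X_2=(AM\mid B)$: $C_d[\phi]=X_1'\mathrm{pr}^\perp_{(X_2)}X_1$. CNBD: a design in $\Omega_{(t,b,k)}$ that is binary (each treatment at most once among the inner plots of each block), a balanced block design (equal replication and each unordered pair of distinct treatments together in the same number of blocks), and such that for each ordered pair $(a,c)$ of distinct treatments exactly $\ell$ inner plots $(i,j)$ have $d(i,j)=a$, $d(i,j+1)=c$. *)

From HB Require Import structures.
From mathcomp Require Import all_boot all_order all_algebra.
From Stdlib Require Import ClassicalEpsilon.
Set Implicit Arguments. Unset Strict Implicit. Unset Printing Implicit Defensive.
Import Order.TTheory GRing.Theory Num.Theory.
Local Open Scope ring_scope.

Definition penrose (R : realFieldType) m n (X : 'M[R]_(m, n)) (G : 'M[R]_(n, m)) :=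
  [/\ X *m G *m X = X, G *m X *m G = G,
      (X *m G)^T = X *m G & (G *m X)^T = G *m X].

(* X^+ : the matrix satisfying the four Penrose conditions (it exists and is
   unique over any ordered field). *)
Definition mpinv (R : realFieldType) m n (X : 'M[R]_(m, n)) : 'M[R]_(n, m) :=
  epsilon (inhabits 0) (penrose X).

Definition prX (R : realFieldType) m n (X : 'M[R]_(m, n)) : 'M[R]_m :=
  X *m mpinv (X^T *m X) *m X^T.

(* A circular design in Omega_(t,b,k): d i j is the treatment on inner plot
   (i, j+1) (blocks and inner plots numbered from 0).  Border plots are
   determined by circularity: the left neighbour of plot j is ord_pred j and
   the right neighbour is ordS j (cyclically in 'I_k). *)
Definition design (t b k : nat) := 'I_b -> 'I_k -> 'I_t.

Lemma card_plots b k : #|{: 'I_b * 'I_k}| = (b * k)%N.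
Proof. by rewrite card_prod !card_ord. Qed.

Definition plot_of b k (r : 'I_(b * k)) : 'I_b * 'I_k :=
  enum_val (cast_ord (esym (card_plots b k)) r).

Section Model.
Variables (R : realFieldType) (t b k : nat) (d : design t b k).

Definition Bmx : 'M[R]_(b * k, b) :=
  \matrix_(r, i) ((plot_of r).1 == i)%:R.
Definition Tmx : 'M[R]_(b * k, t) :=
  \matrix_(r, c) (d (plot_of r).1 (plot_of r).2 == c)%:R.
Definition Lmx : 'M[R]_(b * k, t) :=
  \matrix_(r, c) (d (plot_of r).1 (ord_pred (plot_of r).2) == c)%:R.
Definition Amx : 'M[R]_(b * k, t + t) := row_mx Tmx Lmx.
Definition Kmx : 'M[R]_(t + t, t) := col_mx 1%:M 1%:M.
Definition Mmx : 'M[R]_(t + t) := 1%:M - Kmx *m mpinv (Kmx^T *m Kmx) *m Kmx^T.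
Definition X1mx : 'M[R]_(b * k, t) := Amx *m Kmx *m mpinv (Kmx^T *m Kmx).
Definition X2mx : 'M[R]_(b * k, t + t + b) := row_mx (Amx *m Mmx) Bmx.

Definition info_total : 'M[R]_t := X1mx^T *m (1%:M - prX X2mx) *m X1mx.
End Model.

Definition CNBD (t b k : nat) (d : design t b k) (ell : nat) : Prop :=
  (forall i : 'I_b, injective (d i)) /\
  (exists r : nat, forall a : 'I_t,
      #|[set p : 'I_b * 'I_k | d p.1 p.2 == a]| = r) /\
  (exists lam : nat, forall a c : 'I_t, a != c ->
      #|[set i : 'I_b | (a \in codom (d i)) && (c \in codom (d i))]| = lam) /\
  (forall a c : 'I_t, a != c ->
      #|[set p : 'I_b * 'I_k | (d p.1 p.2 == a) && (d p.1 (ordS p.2) == c)]| = ell).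

(* Let T, L, B be the treatment, left-neighbour and block incidence matrices.
   Circularity makes L a within-block row permutation of T, so T'T = L'L and
   T'B = L'B; neighbour balance gives T'L = ell (J - I), which is symmetric.
   With these, projecting X1 = (T + L)/2 off the columns of X2 = (A M | B)
   leaves X1 - k^-1 B B'T, whence C[phi] = (T'T + T'L)/2 - k^-1 N N' with
   N = T'B.  For a CNBD, T'T = r I and N N' = (r - lambda) I + lambda J;
   counting neighbours and pairs gives r = ell (t - 1) and
   lambda = ell (k - 1), and bk = ell t (t - 1) by definition of ell, which
   turns this into b (k - 2) / (2 (t - 1)) Q_t. *)

From HB Require Import structures.
From mathcomp Require Import all_boot all_order all_algebra.
From mathcomp Require Import ring zify.
From Stdlib Require Import ClassicalEpsilon.
Set Implicit Arguments. Unset Strict Implicit. Unset Printing Implicit Defensive.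
Import Order.TTheory GRing.Theory Num.Theory.
Local Open Scope ring_scope.

Section MoorePenrose.
Variable R : realFieldType.

Lemma trmx_mul_self_eq0 m n (E : 'M[R]_(m, n)) : E^T *m E = 0 -> E = 0.
Proof.
move=> EE0; apply/matrixP => i j; rewrite mxE.
have /eqP := congr1 (fun M : 'M[R]_n => M j j) EE0; rewrite !mxE.
rewrite psumr_eq0 => [|l _]; last by rewrite mxE -expr2 sqr_ge0.
move/allP/(_ i (mem_index_enum _)); rewrite /= mxE -expr2 sqrf_eq0.
by move/eqP.
Qed.

Lemma mulmx_tr_unitmx m n (Y : 'M[R]_(m, n)) : row_free Y -> Y *m Y^T \in unitmx.
Proof.
move=> freeY; rewrite unitmxE unitfE; apply/det0P => -[v v_neq0 vYY0].
have : (v *m Y)^T^T *m (v *m Y)^T = 0.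
  by rewrite trmxK trmx_mul mulmxA -(mulmxA v) vYY0 mul0mx.
by move/trmx_mul_self_eq0/eqP; rewrite trmx_eq0 mulmx_free_eq0 // (negbTE v_neq0).
Qed.

Lemma penrose_rank_factor m n r (F : 'M[R]_(m, r)) (Y : 'M[R]_(r, n)) :
    row_free Y -> row_free F^T ->
  penrose (F *m Y) (Y^T *m invmx (Y *m Y^T) *m invmx (F^T *m F) *m F^T).
Proof.
move=> /mulmx_tr_unitmx uY /mulmx_tr_unitmx; rewrite trmxK => uF.
set G := _ *m F^T.
have FYG : F *m Y *m G = F *m invmx (F^T *m F) *m F^T.
  by rewrite !mulmxA -(mulmxA F Y) -(mulmxA F) mulmxV // mulmx1.
have GFY : G *m (F *m Y) = Y^T *m invmx (Y *m Y^T) *m Y.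
  by rewrite !mulmxA -(mulmxA _ F^T) -(mulmxA _ _ (F^T *m F)) mulVmx // mulmx1.
split.
- by rewrite FYG !mulmxA -(mulmxA _ F^T) -(mulmxA _ _ (F^T *m F)) mulVmx // mulmx1.
- by rewrite GFY !mulmxA -(mulmxA _ Y) -(mulmxA _ _ (Y *m Y^T)) mulVmx // mulmx1.
- by rewrite FYG !trmx_mul trmxK trmx_inv trmx_mul trmxK mulmxA.
- by rewrite GFY !trmx_mul trmxK trmx_inv trmx_mul trmxK mulmxA.
Qed.

Lemma penrose_exists m n (X : 'M[R]_(m, n)) : exists G, penrose X G.
Proof.
pose F := X *m pinvmx (row_base X).
have X_FY : X = F *m row_base X by rewrite mulmxKpV // eq_row_base.
have freeF : row_free F^T.
  rewrite /row_free mxrank_tr eqn_leq rank_leq_col /=.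
  by have := mxrankM_maxl F (row_base X); rewrite -X_FY.
by rewrite X_FY; eexists; apply: penrose_rank_factor (row_base_free X) freeF.
Qed.

Lemma mpinvP m n (X : 'M[R]_(m, n)) : penrose X (mpinv X).
Proof. exact: epsilon_spec (penrose_exists X). Qed.

Lemma mpinv_scalar n (a : R) : a != 0 -> mpinv (a%:M : 'M[R]_n) = a^-1%:M.
Proof.
move=> a_neq0; have [aGa _ _ _] := mpinvP (a%:M : 'M[R]_n).
move: aGa; rewrite mul_scalar_mx mul_mx_scalar scalerA.
move=> /(congr1 (fun M => (a * a)^-1 *: M)).
rewrite scalerA mulVf ?mulf_neq0 // scale1r => ->.
by rewrite scale_scalar_mx invfM -mulrA mulVf // mulr1.
Qed.

Lemma mulmx_mpinv_gram m n (X : 'M[R]_(m, n)) :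
  X *m mpinv (X^T *m X) *m (X^T *m X) = X.
Proof.
set S := X^T *m X; have [SGS _ _ _] := mpinvP S.
have trS : S^T = S by rewrite /S trmx_mul trmxK.
set E := X *m mpinv S *m S - X.
have EX0 : E^T *m X = 0.
  rewrite /E linearB /= mulmxBl.
  have -> : (X *m mpinv S *m S)^T *m X = (S *m mpinv S *m S)^T.
    rewrite [in RHS]trmx_mul trS [(S *m _)^T]trmx_mul trS.
    by rewrite [(X *m _ *m S)^T]trmx_mul trS [(X *m _)^T]trmx_mul -!mulmxA.
  by rewrite SGS trS subrr.
have : E^T *m E = 0 by rewrite {2}/E mulmxBr !mulmxA EX0 !mul0mx subrr.
by move/trmx_mul_self_eq0/eqP; rewrite subr_eq0 => /eqP.
Qed.

Lemma prX_perp_residual m n p (X : 'M[R]_(m, n)) (V : 'M[R]_(n, p)) U :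
  X^T *m U = 0 -> (1%:M - prX X) *m (X *m V + U) = U.
Proof.
move=> XU0; rewrite mulmxBl mul1mx mulmxDr.
have -> : prX X *m U = 0 by rewrite /prX -mulmxA XU0 mulmx0.
have -> : prX X *m (X *m V) = X *m V.
  by rewrite /prX !mulmxA -(mulmxA _ X^T) mulmx_mpinv_gram.
by rewrite addr0 addrAC subrr add0r.
Qed.

End MoorePenrose.

Lemma card_set_sum (T : finType) (P : pred T) : (#|[set x | P x]| = \sum_x P x)%N.
Proof. by rewrite -sum1dep_card big_mkcond. Qed.

Lemma card_set_fibers (T T' : finType) (P : pred T) (f : T -> T') :
  (#|[set x | P x]| = \sum_y #|[set x | P x && (f x == y)]|)%N.
Proof.
rewrite -sum1dep_card (partition_big f xpredT) //=.
by apply: eq_bigr => y _; rewrite sum1dep_card.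
Qed.

Lemma card_fiber_inj (T T' : finType) (f : T -> T') y :
  injective f -> #|[set x | f x == y]| = (y \in codom f) :> nat.
Proof.
move=> injf; case: codomP => [[x ->]|no_x].
  rewrite (_ : [set _ | _] = [set x]) ?cards1 //.
  by apply/setP => z; rewrite !inE (inj_eq injf).
apply/eqP; rewrite cards_eq0; apply/eqP/setP => x; rewrite !inE.
by apply/negbTE/eqP => fx; apply: no_x; exists x.
Qed.

Lemma ordS_neq n (j : 'I_n) : (1 < n)%N -> ordS j != j.
Proof.
move=> n_gt1; apply/eqP => /(congr1 val) /=.
have [lt_j1n | ge_j1n] := ltnP j.+1 n.
  by rewrite modn_small // => /eqP; rewrite gtn_eqF.
have j1n : j.+1 = n by apply/eqP; rewrite eqn_leq ge_j1n ltn_ord.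
by rewrite j1n modnn => j0; move: n_gt1; rewrite -j1n -j0.
Qed.

Lemma sum_nat_const_except n (a : 'I_n) (F : 'I_n -> nat) x y :
  (forall c, c != a -> F c = y) -> F a = x -> (\sum_c F c = y * (n - 1) + x)%N.
Proof.
move=> Fc Fa; rewrite (bigD1 a) //= Fa addnC (eq_bigr (fun=> y)) //.
by rewrite sum_nat_cond_const (cardsE (predC1 a)) cardC1 card_ord subn1 mulnC.
Qed.

Section TotalEffectMatrices.
Variables (R : realFieldType) (t : nat).

Lemma Kmx_gram : (Kmx R t)^T *m Kmx R t = 2%:M.
Proof. by rewrite /Kmx tr_col_mx mul_row_col trmx1 mul1mx -raddfD. Qed.

Lemma mpinv_Kmx_gram : mpinv ((Kmx R t)^T *m Kmx R t) = 2^-1%:M.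
Proof. by rewrite Kmx_gram mpinv_scalar // pnatr_eq0. Qed.

Lemma trMmx_Kmx : (Mmx R t)^T *m Kmx R t = 0.
Proof.
rewrite /Mmx mpinv_Kmx_gram linearB /= trmx1 !trmx_mul trmxK tr_scalar_mx.
rewrite mulmxBl mul1mx -!mulmxA Kmx_gram -scalar_mxM mulVf ?pnatr_eq0 //.
by rewrite mulmx1 subrr.
Qed.

End TotalEffectMatrices.

Section PlotIncidence.
Variables (R : realFieldType) (b k : nat).
Implicit Types p : 'I_b * 'I_k.

Definition plot_ind m (f : 'I_b * 'I_k -> 'I_m) : 'M[R]_(b * k, m) :=
  \matrix_(r, a) (f (plot_of r) == a)%:R.

Definition left_plot p := (p.1, ord_pred p.2).
Definition right_plot p := (p.1, ordS p.2).

Lemma left_plotK : cancel left_plot right_plot.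
Proof. by case=> i j; rewrite /right_plot /= ord_predK. Qed.

Lemma right_plotK : cancel right_plot left_plot.
Proof. by case=> i j; rewrite /left_plot /= ordSK. Qed.

Lemma left_plot_inj : injective left_plot.
Proof. exact: can_inj left_plotK. Qed.

Lemma right_plot_inj : injective right_plot.
Proof. exact: can_inj right_plotK. Qed.

Lemma plot_of_bij : bijective (@plot_of b k).
Proof.
exists (fun p => cast_ord (card_plots b k) (enum_rank p)) => [r|p]; rewrite /plot_of.
  by rewrite enum_valK cast_ordKV.
by rewrite cast_ordK enum_rankK.
Qed.

Lemma tr_plot_ind_mul m n (f : _ -> 'I_m) (g : _ -> 'I_n) :
  (plot_ind f)^T *m plot_ind g =
    \matrix_(a, c) #|[set p | (f p == a) && (g p == c)]|%:R.
Proof.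
apply/matrixP => a c; rewrite !mxE card_set_sum natr_sum.
rewrite (reindex (@plot_of b k)) /=; last exact/onW_bij/plot_of_bij.
by apply: eq_bigr => r _; rewrite !mxE -natrM mulnb.
Qed.

Lemma tr_plot_ind_mul_comp m n (f : _ -> 'I_m) (g : _ -> 'I_n) h :
  injective h ->
  (plot_ind (f \o h))^T *m plot_ind (g \o h) = (plot_ind f)^T *m plot_ind g.
Proof.
move=> inj_h; rewrite !tr_plot_ind_mul; apply/matrixP => a c; rewrite !mxE.
rewrite -[in RHS](card_preimset _ inj_h); congr (_%:R).
by apply: eq_card => p; rewrite !inE.
Qed.

Lemma card_block_plots (P : 'I_b -> 'I_k -> bool) i :
  #|[set p | P p.1 p.2 && (p.1 == i)]| = #|[set j | P i j]|.
Proof.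
have inj_pair : injective (fun j : 'I_k => (i, j)) by move=> j j' [].
rewrite -(card_imset _ inj_pair); apply: eq_card => -[i' j]; rewrite !inE.
apply/andP/imsetP => [[/= Pij /eqP i'i]|[j' Pij' [-> ->]]].
  by exists j; rewrite ?inE -?i'i.
by rewrite inE in Pij'.
Qed.

Lemma gram_block_ind : (plot_ind fst)^T *m plot_ind fst = (k%:R : R)%:M.
Proof.
rewrite tr_plot_ind_mul; apply/matrixP => i i'; rewrite !mxE.
rewrite (card_block_plots (fun x _ => x == i)) eq_sym.
case: eqP => _; last by rewrite (_ : [set _ | _] = set0) ?cards0 //; apply/setP.
by rewrite -[k in RHS]card_ord -cardsT; congr (#|_|%:R); apply/setP.
Qed.

End PlotIncidence.

Arguments left_plot {b k}.
Arguments right_plot {b k}.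
Arguments left_plot_inj {b k}.
Arguments right_plot_inj {b k}.

Section DesignMatrices.
Variables (R : realFieldType) (t b k : nat) (d : design t b k).

Definition treatment (p : 'I_b * 'I_k) := d p.1 p.2.

Local Notation T := (Tmx R d).
Local Notation L := (Lmx R d).
Local Notation B := (Bmx R b k).

Lemma Tmx_plot_ind : T = plot_ind R treatment.
Proof. by []. Qed.

Lemma Lmx_plot_ind : L = plot_ind R (treatment \o left_plot).
Proof. by []. Qed.

Lemma Bmx_plot_ind : B = plot_ind R fst.
Proof. by []. Qed.

Lemma gram_Lmx : L^T *m L = T^T *m T.
Proof. by rewrite Lmx_plot_ind tr_plot_ind_mul_comp //; apply: left_plot_inj. Qed.

Lemma trLmx_Bmx : L^T *m B = T^T *m B.
Proof.
rewrite Lmx_plot_ind (_ : B = plot_ind R (fst \o left_plot)) //.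
by rewrite tr_plot_ind_mul_comp //; apply: left_plot_inj.
Qed.

Lemma X1mxE : X1mx R d = 2^-1 *: (T + L).
Proof. by rewrite /X1mx mpinv_Kmx_gram /Amx /Kmx mul_row_col !mulmx1 mul_mx_scalar. Qed.

(* U = X1 - B (B'B)^-1 B'T is orthogonal to B, and T'T = L'L, T'L = L'T make
   it orthogonal to A M = ((T - L) | (L - T))/2 as well. *)
Lemma info_total_reduced : (k%:R : R) != 0 -> T^T *m L = L^T *m T ->
  info_total R d = 2^-1 *: (T^T *m T + T^T *m L)
                   - (k%:R)^-1 *: (T^T *m B *m (T^T *m B)^T).
Proof.
move=> k_neq0 symTL; have two_neq0 : (2 : R) != 0 by rewrite pnatr_eq0.
set N := T^T *m B; set U := X1mx R d - B *m ((k%:R)^-1 *: N^T).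
have BTT : B^T *m T = N^T by rewrite /N trmx_mul trmxK.
have BTL : B^T *m L = N^T by rewrite /N -trLmx_Bmx trmx_mul trmxK.
have TU : T^T *m U = 2^-1 *: (T^T *m T + T^T *m L) - (k%:R)^-1 *: (N *m N^T).
  by rewrite /U X1mxE mulmxBr -scalemxAr mulmxDr mulmxA -/N -scalemxAr.
have LU : L^T *m U = T^T *m U.
  rewrite TU /U X1mxE mulmxBr -scalemxAr mulmxDr mulmxA trLmx_Bmx -/N.
  by rewrite -scalemxAr gram_Lmx -symTL [_ + T^T *m T]addrC.
have BU : B^T *m U = 0.
  rewrite /U X1mxE mulmxBr -scalemxAr mulmxDr BTT BTL mulmxA Bmx_plot_ind.
  rewrite gram_block_ind mul_scalar_mx scalerA mulfV // scale1r.
  by rewrite -mulr2n -scaler_nat scalerA mulVf // scale1r subrr.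
have X2U : (X2mx R d)^T *m U = 0.
  rewrite /X2mx tr_row_mx mul_col_mx BU trmx_mul -mulmxA /Amx tr_row_mx mul_col_mx LU.
  rewrite (_ : col_mx _ _ = Kmx R t *m (T^T *m U)); last by rewrite /Kmx mul_col_mx !mul1mx.
  by rewrite mulmxA trMmx_Kmx mul0mx col_mx0.
have X1_split : X1mx R d = X2mx R d *m col_mx 0 ((k%:R)^-1 *: N^T) + U.
  by rewrite /X2mx mul_row_col mulmx0 add0r /U addrC subrK.
have residual : (1%:M - prX (X2mx R d)) *m X1mx R d = U.
  by rewrite {1}X1_split prX_perp_residual.
rewrite /info_total -mulmxA residual {1}X1mxE [(_ *: _)^T]linearZ /= [(T + L)^T]linearD /=.
rewrite -scalemxAl mulmxDl LU.
by rewrite -mulr2n -scaler_nat scalerA mulVf // scale1r TU.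
Qed.

End DesignMatrices.

Section NeighbourBalancedDesign.
Variables (R : realFieldType) (t b k : nat) (d : design t b k) (r lam ell : nat).
Hypothesis binary : forall i, injective (d i).
Hypothesis replication : forall a, #|[set p : 'I_b * 'I_k | d p.1 p.2 == a]| = r.
Hypothesis concurrence : forall a c : 'I_t, a != c ->
  #|[set i : 'I_b | (a \in codom (d i)) && (c \in codom (d i))]| = lam.
Hypothesis neighbours : forall a c : 'I_t, a != c ->
  #|[set p : 'I_b * 'I_k | (d p.1 p.2 == a) && (d p.1 (ordS p.2) == c)]| = ell.
Hypothesis k_gt1 : (1 < k)%N.

Local Notation T := (Tmx R d).
Local Notation L := (Lmx R d).
Local Notation B := (Bmx R b k).

Lemma card_left_neighbours a c :
  #|[set p | (treatment d p == a) && (treatment d (left_plot p) == c)]| =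
    if a == c then 0%N else ell.
Proof.
case: eqP => [<-|/eqP a_neq_c].
  apply/eqP; rewrite cards_eq0; apply/eqP/setP => p; rewrite !inE.
  apply/negbTE/andP => -[/eqP <- /eqP /binary /= pred_p].
  by have := ordS_neq (ord_pred p.2) k_gt1; rewrite ord_predK pred_p eqxx.
have c_neq_a : c != a by rewrite eq_sym.
rewrite -(neighbours c_neq_a) -(card_preimset _ right_plot_inj).
by apply: eq_card => p; rewrite !inE right_plotK andbC.
Qed.

Lemma gram_Tmx : T^T *m T = \matrix_(a, c) (if a == c then r else 0%N)%:R.
Proof.
rewrite Tmx_plot_ind tr_plot_ind_mul; apply/matrixP => a c; rewrite !mxE.
case: eqP => [<-|/eqP a_neq_c].
  by rewrite -(replication a); congr _%:R; apply: eq_card => p; rewrite !inE andbb.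
rewrite (_ : [set _ | _] = set0) ?cards0 //; apply/setP => p; rewrite !inE.
by apply/negbTE; apply: contra a_neq_c => /andP [/eqP <- /eqP ->].
Qed.

Lemma trTmx_Lmx : T^T *m L = \matrix_(a, c) (if a == c then 0%N else ell)%:R.
Proof.
rewrite Tmx_plot_ind Lmx_plot_ind tr_plot_ind_mul; apply/matrixP => a c.
by rewrite !mxE card_left_neighbours.
Qed.

Lemma trTmx_Lmx_sym : T^T *m L = L^T *m T.
Proof.
rewrite -[L^T *m T]trmxK trmx_mul trmxK trTmx_Lmx.
by apply/matrixP => a c; rewrite !mxE eq_sym.
Qed.

Lemma trTmx_Bmx : T^T *m B = \matrix_(a, i) (a \in codom (d i))%:R.
Proof.
rewrite Tmx_plot_ind Bmx_plot_ind tr_plot_ind_mul; apply/matrixP => a i.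
by rewrite !mxE (card_block_plots (fun x y => d x y == a)) card_fiber_inj.
Qed.

Lemma block_replication a : #|[set i | a \in codom (d i)]| = r.
Proof.
rewrite -(replication a) (card_set_fibers _ fst) card_set_sum.
apply: eq_bigr => i _.
by rewrite (card_block_plots (fun x y => d x y == a)) card_fiber_inj.
Qed.

Lemma incidence_gram :
  T^T *m B *m (T^T *m B)^T = \matrix_(a, c) (if a == c then r else lam)%:R.
Proof.
rewrite trTmx_Bmx; apply/matrixP => a c; rewrite !mxE.
under eq_bigr do rewrite !mxE -natrM mulnb.
rewrite -natr_sum -card_set_sum.
case: eqP => [<-|/eqP a_neq_c]; last by rewrite concurrence.
by rewrite -(block_replication a); congr _%:R; apply: eq_card => i; rewrite !inE andbb.
Qed.

Lemma replication_neighbours : (0 < t)%N -> r = (ell * (t - 1))%N.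
Proof.
move=> t_gt0; pose a := Ordinal t_gt0.
rewrite -(replication a) (card_set_fibers _ (fun p => treatment d (left_plot p))).
rewrite (@sum_nat_const_except _ a _ 0%N ell) ?addn0 // => [c c_neq_a|].
  by rewrite card_left_neighbours eq_sym (negbTE c_neq_a).
by rewrite card_left_neighbours eqxx.
Qed.

Lemma concurrence_replication : (0 < t)%N -> (lam * (t - 1) + r = r * k)%N.
Proof.
move=> t_gt0; pose a := Ordinal t_gt0.
pose pairs c := #|[set i | (a \in codom (d i)) && (c \in codom (d i))]|.
rewrite -(@sum_nat_const_except _ a pairs); first last.
- by rewrite /pairs -(block_replication a); apply: eq_card => i; rewrite !inE andbb.
- by move=> c c_neq_a; rewrite /pairs concurrence // eq_sym.
under eq_bigr do rewrite /pairs card_set_sum.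
rewrite exchange_big -(block_replication a) card_set_sum big_distrl /=.
apply: eq_bigr => i _; under eq_bigr do rewrite -mulnb.
by rewrite -big_distrr /= -card_set_sum cardsE card_codom // card_ord.
Qed.

Lemma info_total_cnbd : info_total R d =
  \matrix_(a, c) (if a == c then 2^-1 * r%:R - (k%:R)^-1 * r%:R
                  else 2^-1 * ell%:R - (k%:R)^-1 * lam%:R).
Proof.
have k_neq0 : (k%:R : R) != 0 by rewrite pnatr_eq0 -lt0n ltnW.
rewrite info_total_reduced //; last exact: trTmx_Lmx_sym.
rewrite gram_Tmx trTmx_Lmx incidence_gram.
by apply/matrixP => a c; rewrite !mxE; case: eqP => _; rewrite mulr0n ?addr0 ?add0r.
Qed.

End NeighbourBalancedDesign.

Theorem lemma4 (R : realFieldType) (t b k : nat) (d : design t b k) :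
  (0 < b)%N -> (3 <= k)%N -> (k <= t)%N ->
  (t * (t - 1) %| b * k)%N ->
  CNBD d ((b * k) %/ (t * (t - 1))) ->
  info_total R d =
    ((b * (k - 2))%:R / (2 * (t - 1))%:R) *:
      (1%:M - (t%:R)^-1 *: const_mx 1 : 'M[R]_t).
Proof.
move=> _ k_ge3 k_le_t dvd_bk [binary [[r replication] [[lam concurrence] neighbours]]].
set ell := (b * k %/ _)%N in neighbours.
have k_gt1 : (1 < k)%N by apply: leq_trans k_ge3.
have t_gt1 : (1 < t)%N by apply: leq_trans k_le_t.
have t_gt0 := ltnW t_gt1.
have r_ell := replication_neighbours binary replication neighbours k_gt1 t_gt0.
have lam_ell : lam = (ell * (k - 1))%N.
  have := concurrence_replication binary replication concurrence t_gt0.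
  rewrite r_ell => conc; apply/eqP; rewrite -(@eqn_pmul2r (t - 1)) ?subn_gt0 //.
  apply/eqP; nia.
have k_neq0 : (k%:R : R) != 0 by rewrite pnatr_eq0 -lt0n ltnW.
have b_ell : (b%:R : R) = (ell * (t * (t - 1)))%:R / k%:R.
  by rewrite /ell divnK // natrM mulfK.
rewrite (info_total_cnbd R binary replication concurrence neighbours k_gt1) r_ell lam_ell.
have t_neq0 : (t%:R : R) != 0 by rewrite pnatr_eq0 -lt0n.
have t1_neq0 : (t%:R - 1 : R) != 0.
  by rewrite -(natrB _ (ltnW t_gt1)) pnatr_eq0 subn_eq0 -ltnNge.
apply/matrixP => a c; rewrite !mxE !natrM b_ell !natrM.
rewrite !natrB ?(ltnW k_gt1) ?(ltnW t_gt1) //.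
by case: eqP => _ /=; field; rewrite t_neq0 t1_neq0 k_neq0.
Qed.
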